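(* Let $R$ be a commutative ring with nonzero identity, let $\delta$ be an expansion of ideals of $R$, and let $I$ be a proper ideal of $R$. The following statements are equivalent: (1) $I$ is a $\delta$-$n$-ideal of $R$. (2) $(I:a)\subseteq\sqrt{0}$ for all $a\in R\setminus\delta(I)$. (3) If $aJ\subseteq I$ for some $a\in R$ and some ideal $J$ of $R$, then $a\in\sqrt{0}$ or $J\subseteq\delta(I)$. (4) If $JK\subseteq I$ for some ideals $J,K$ of $R$, then $J\cap(R\setminus\sqrt{0})=\emptyset$ or $K\subseteq\delta(I)$.
   Context: An expansion of ideals of a ring $R$ is a map $\delta$ from the set of ideals of $R$ to itself such that $I\subseteq\delta(I)$ for every ideal $I$, and $\delta(I)\subseteq\delta(J)$ whenever $I\subseteq J$. $\sqrt{0}$ denotes the nilradical of $R$, and $(I:a)=\{r\in R: ra\in I\}$. Given an expansion $\delta$, a proper ideal $I$ of $R$ is a $\delta$-$n$-ideal if whenever $a,b\in R$ with $ab\in I$ and $a\notin\sqrt{0}$, then $b\in\delta(I)$. *)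

(* Ideals of a commutative ring are represented as predicates R -> Prop. *)
From mathcomp Require Import all_boot all_algebra.
Set Implicit Arguments. Unset Strict Implicit. Unset Printing Implicit Defensive.
Import GRing.Theory.
Local Open Scope ring_scope.

Section Ideals.
Variable R : comNzRingType.

Definition psubset (A B : R -> Prop) : Prop := forall x, A x -> B x.

Definition dis_ideal (I : R -> Prop) : Prop :=
  [/\ I 0, (forall x y, I x -> I y -> I (x + y)) & (forall r x, I x -> I (r * x))].

Definition dproper_ideal (I : R -> Prop) : Prop := dis_ideal I /\ ~ I 1.

Definition nilrad (x : R) : Prop := exists n : nat, x ^+ n = 0.

Definition colon (I : R -> Prop) (a : R) : R -> Prop := fun r => I (r * a).

Definition scal_ideal (a : R) (J : R -> Prop) : R -> Prop :=
  fun x => exists2 j, J j & x = a * j.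

Definition ideal_prod (J K : R -> Prop) : R -> Prop :=
  fun x => exists (n : nat) (u v : 'I_n -> R),
    (forall i, J (u i) /\ K (v i)) /\ x = \sum_(i < n) u i * v i.

Definition expansion (delta : (R -> Prop) -> (R -> Prop)) : Prop :=
  (forall I, dis_ideal I -> dis_ideal (delta I)) /\
  (forall I, dis_ideal I -> psubset I (delta I)) /\
  (forall I J, dis_ideal I -> dis_ideal J -> psubset I J -> psubset (delta I) (delta J)).

Definition delta_n_ideal (delta : (R -> Prop) -> (R -> Prop)) (I : R -> Prop) : Prop :=
  dproper_ideal I /\
  forall a b : R, I (a * b) -> ~ nilrad a -> delta I b.

End Ideals.

(* Conditions (2) and (3)
   quantify over more data than (1) and follow from it directly; conversely, given ab in I with
   a not nilpotent, (2) is applied to b and a, (3) to a and the principal ideal Rb, and (4) to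
   the principal ideals Ra and Rb, whose product lies in I. *)
From mathcomp Require Import all_boot all_algebra.
From Stdlib Require Import Classical.
Set Implicit Arguments. Unset Strict Implicit. Unset Printing Implicit Defensive.
Import GRing.Theory.
Local Open Scope ring_scope.

Section NIdealConditions.
Variable R : comNzRingType.
Implicit Types (I J K D : R -> Prop) (a b : R).

Definition n_condition I D : Prop :=
  forall a b, I (a * b) -> ~ nilrad a -> D b.

Definition principal b : R -> Prop := fun x => exists r, x = r * b.

Lemma principal_dis_ideal b : dis_ideal (principal b).
Proof.
split.
- by exists 0; rewrite mul0r.
- by move=> x y [r ->] [s ->]; exists (r + s); rewrite mulrDl.
- by move=> r x [s ->]; exists (r * s); rewrite mulrA.
Qed.

Lemma principal_id b : principal b b.
Proof. by exists 1; rewrite mul1r. Qed.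

Lemma scal_principal_sub I a b :
  dis_ideal I -> I (a * b) -> psubset (scal_ideal a (principal b)) I.
Proof.
case=> _ _ IM Iab x [_ [r ->] ->].
by rewrite mulrCA; apply: IM.
Qed.

Lemma ideal_prod_principal_sub I a b :
  dis_ideal I -> I (a * b) -> psubset (ideal_prod (principal a) (principal b)) I.
Proof.
case=> I0 ID IM Iab x [n [u [v [Huv ->]]]].
apply: (big_ind I) => // i _.
have [[r ->] [s ->]] := Huv i.
by rewrite mulrACA; apply: IM.
Qed.

Lemma ideal_prod_mul J K x y : J x -> K y -> ideal_prod J K (x * y).
Proof.
move=> Jx Ky; exists 1%N, (fun=> x), (fun=> y).
by split=> //; rewrite big_ord1.
Qed.

Lemma n_conditionP_colon I D :
  n_condition I D <-> forall a, ~ D a -> psubset (colon I a) (@nilrad R).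
Proof.
split=> [H a Da r Ira | H a b Iab Na].
- by apply: NNPP => Nr; exact: Da (H r a Ira Nr).
- by apply: NNPP => Db; exact: Na (H b Db a Iab).
Qed.

Lemma n_conditionP_scal I D : dis_ideal I ->
  n_condition I D <->
  forall a J, dis_ideal J -> psubset (scal_ideal a J) I -> nilrad a \/ psubset J D.
Proof.
move=> idI; split=> [H a J _ aJI | H a b Iab Na].
- have [Na | Na] := classic (nilrad a); [by left | right].
  by move=> j Jj; apply: H Na; apply: aJI; exists j.
- have [// | RbD] := H a _ (principal_dis_ideal b) (scal_principal_sub idI Iab).
  exact/RbD/principal_id.
Qed.

Lemma n_conditionP_prod I D : dis_ideal I ->
  n_condition I D <->
  forall J K, dis_ideal J -> dis_ideal K -> psubset (ideal_prod J K) I ->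
    (forall x, J x -> nilrad x) \/ psubset K D.
Proof.
move=> idI; split=> [H J K _ _ JKI | H a b Iab Na].
- have [[x [Jx Nx]] | Jnil] := classic (exists x, J x /\ ~ nilrad x).
  + by right=> k Kk; apply: H Nx; apply/JKI/ideal_prod_mul.
  + by left=> x Jx; apply: NNPP => Nx; apply: Jnil; exists x.
- have [Ranil | RbD] := H _ _ (principal_dis_ideal a) (principal_dis_ideal b)
    (ideal_prod_principal_sub idI Iab).
  + by case: Na; apply/Ranil/principal_id.
  + exact/RbD/principal_id.
Qed.

Lemma delta_n_idealE (delta : (R -> Prop) -> (R -> Prop)) I :
  dproper_ideal I -> delta_n_ideal delta I <-> n_condition I (delta I).
Proof. by move=> pI; split=> [[] // | /(conj pI)]. Qed.

End NIdealConditions.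

Theorem theorem2p7 (R : comNzRingType) (delta : (R -> Prop) -> (R -> Prop))
  (I : R -> Prop) :
  expansion delta -> dproper_ideal I ->
  (delta_n_ideal delta I <->
     (forall a : R, ~ delta I a -> psubset (colon I a) (@nilrad R))) /\
  (delta_n_ideal delta I <->
     (forall (a : R) (J : R -> Prop), dis_ideal J ->
        psubset (scal_ideal a J) I -> nilrad a \/ psubset J (delta I))) /\
  (delta_n_ideal delta I <->
     (forall J K : R -> Prop, dis_ideal J -> dis_ideal K ->
        psubset (ideal_prod J K) I ->
        (forall x, J x -> nilrad x) \/ psubset K (delta I))).
Proof.
move=> _ pI; have [idI _] := pI.
rewrite !(delta_n_idealE delta pI).
split; last split.
- exact: n_conditionP_colon.
- exact: n_conditionP_scal idI.
- exact: n_conditionP_prod idI.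
Qed.
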